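(* In the standard LLP setup, for every $N\ge1$: $L(G,\gamma^{N+1}_{cons})\supseteq L(G,\gamma^N_{cons})$.
   Context: Standard LLP setup. $\Sigma=\Sigma_c\,\dot\cup\,\Sigma_{uc}$ is a finite alphabet partitioned into controllable and uncontrollable events. The plant $G$ has generated language $L(G)$ and marked language $L_m(G)$ with $L(G)=\overline{L_m(G)}$ ($\overline{M}$ = set of prefixes of strings in $M$). The legal language $K\subseteq L_m(G)$ satisfies $K=\overline{K}\cap L_m(G)$. For a prefix-closed $L$, $M$ is controllable w.r.t. $L$ if $\overline{M}\Sigma_{uc}\cap L\subseteq\overline{M}$. For a language $L$ and $s\in\Sigma^*$: $L/s=\{t: st\in L\}$; $L|_N=\{t\in L:|t|\le N\}$; $\Sigma_{L(G)}(s)=\{\sigma\in\Sigma: s\sigma\in L(G)\}$. $M^{\uparrow/s|_N}$ is the supremal sublanguage of $M$ controllable w.r.t. $L(G)/s|_N$. Conservative attitude: $f^N_{cons}(s)=[K/s|_{N-1}]^{\uparrow/s|_N}$; control policy $\gamma^N_{cons}(s)=(\overline{f^N_{cons}(s)}\cap\Sigma)\cup(\Sigma_{uc}\cap\Sigma_{L(G)}(s))$. Closed-loop language $L(G,\gamma)$: $\epsilon\in L(G,\gamma)$, and $s\sigma\in L(G,\gamma)$ iff $s\in L(G,\gamma)$, $s\sigma\in L(G)$, $\sigma\in\gamma(s)$. *)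

From mathcomp Require Import all_boot.
Set Implicit Arguments. Unset Strict Implicit. Unset Printing Implicit Defensive.

Section LLP.
Variable Sigma : finType.

Definition lang := seq Sigma -> Prop.

Definition pclos (M : lang) : lang := fun t => exists u, M (t ++ u).

Definition subl (M1 M2 : lang) : Prop := forall t, M1 t -> M2 t.

Definition quot (L : lang) (s : seq Sigma) : lang := fun t => L (s ++ t).

Definition trunc (L : lang) (N : nat) : lang := fun t => L t /\ size t <= N.

Definition controllable (uc : pred Sigma) (M L : lang) : Prop :=
  forall t sigma, pclos M t -> uc sigma -> L (rcons t sigma) -> pclos M (rcons t sigma).

Definition supC (uc : pred Sigma) (M L : lang) : lang :=
  fun t => exists M' : lang, subl M' M /\ controllable uc M' L /\ M' t.

Definition LG (Lm : lang) : lang := pclos Lm.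

Definition f_cons (uc : pred Sigma) (Lm K : lang) (N : nat) (s : seq Sigma) : lang :=
  supC uc (trunc (quot K s) N.-1) (trunc (quot (LG Lm) s) N).

Definition gamma_cons (uc : pred Sigma) (Lm K : lang) (N : nat)
  (s : seq Sigma) (sigma : Sigma) : Prop :=
  pclos (f_cons uc Lm K N s) [:: sigma] \/ (uc sigma /\ LG Lm (rcons s sigma)).

Inductive closed_loop (L : lang) (gamma : seq Sigma -> Sigma -> Prop) : lang :=
| cl_nil : closed_loop L gamma [::]
| cl_snoc s sigma : closed_loop L gamma s -> L (rcons s sigma) -> gamma s sigma ->
    closed_loop L gamma (rcons s sigma).

End LLP.

From mathcomp Require Import all_boot.

(* The closed-loop language is built by induction on words, so it grows
   whenever the control policy grows pointwise (closed_loop_mono).  The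
   policy gamma^N_cons(s) only depends on N through f^N_cons(s), hence it
   suffices that f^N_cons(s) is contained in f^{N+1}_cons(s).  A witness M'
   for f^N_cons(s) -- a sublanguage of K/s|_{N-1}, controllable w.r.t.
   L(G)/s|_N -- is also a witness for f^{N+1}_cons(s): it is a sublanguage of
   the larger K/s|_N, and since all its prefixes have length at most N-1,
   every uncontrollable one-step extension has length at most N, so the
   controllability condition w.r.t. L(G)/s|_{N+1} is the same as w.r.t.
   L(G)/s|_N (controllable_trunc_irrelevant).  Here N >= 1 is what makes
   N-1 < N. *)

Section Monotonicity.
Variable Sigma : finType.
Implicit Types (L M : lang Sigma) (n m : nat).

Lemma trunc_mono L n m : n <= m -> subl (trunc L n) (trunc L m).
Proof. by move=> le_nm t [Lt le_tn]; split=> //; apply: leq_trans le_nm. Qed.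

(* If the words of M have length at most n, controllability of M w.r.t. a
   truncation L|_m with n < m only inspects words of length at most n+1,
   so it transfers to any other truncation L|_m'. *)
Lemma controllable_trunc_irrelevant (uc : pred Sigma) L M n m m' :
  n < m -> (forall t, M t -> size t <= n) ->
  controllable uc M (trunc L m) -> controllable uc M (trunc L m').
Proof.
move=> lt_nm short ctrlM t a [u Mtu] uca [Lta _].
apply: (ctrlM t a) => //; first by exists u.
split=> //; apply: leq_trans lt_nm.
have := short _ Mtu; rewrite size_cat size_rcons ltnS.
exact: leq_trans (leq_addr _ _).
Qed.

Lemma supC_mono (uc : pred Sigma) M1 M2 L1 L2 :
  subl M1 M2 ->
  (forall M', subl M' M1 -> controllable uc M' L1 -> controllable uc M' L2) ->
  subl (supC uc M1 L1) (supC uc M2 L2).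
Proof.
move=> subM ctrl12 t [M' [subM' [ctrlM' M't]]].
exists M'; split; last split=> //.
- by move=> u /subM'; apply: subM.
- exact: ctrl12.
Qed.

Variables (uc : pred Sigma) (Lm K : lang Sigma).

Lemma f_cons_mono N s : 1 <= N ->
  subl (f_cons uc Lm K N s) (f_cons uc Lm K N.+1 s).
Proof.
move=> N_gt0; apply: supC_mono => [|M' subM']; first exact: trunc_mono (leq_pred N).
apply: (@controllable_trunc_irrelevant _ _ _ N.-1 N); first by rewrite prednK.
by move=> t /subM' [].
Qed.

Lemma gamma_cons_mono N s a : 1 <= N ->
  gamma_cons uc Lm K N s a -> gamma_cons uc Lm K N.+1 s a.
Proof.
move=> N_gt0 [[u fNu]|uc_step]; last by right.
by left; exists u; apply: f_cons_mono.
Qed.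

End Monotonicity.

Lemma closed_loop_mono (Sigma : finType) (L : lang Sigma)
    (gamma1 gamma2 : seq Sigma -> Sigma -> Prop) :
  (forall s a, gamma1 s a -> gamma2 s a) ->
  subl (closed_loop L gamma1) (closed_loop L gamma2).
Proof.
move=> sub12 s; elim=> [|t a _ IH Lta g1ta]; first exact: cl_nil.
by apply: cl_snoc => //; apply: sub12.
Qed.

Theorem theorem5 (Sigma : finType) (uc : pred Sigma) (Lm K : seq Sigma -> Prop)
  (HK_sub : forall t, K t -> Lm t)
  (HK_closed : forall t, K t <-> (pclos K t /\ Lm t))
  (N : nat) (HN : 1 <= N) :
  forall s, closed_loop (LG Lm) (gamma_cons uc Lm K N) s ->
            closed_loop (LG Lm) (gamma_cons uc Lm K N.+1) s.
Proof.
apply: closed_loop_mono => s a.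
exact: gamma_cons_mono.
Qed.
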